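(* Let $G$ be an outside option CDF on $[0,1]$ with mean $\xi\in(0,1)$, full support, and a log-concave density $g$, known to the seller. For $s\in[0,\xi)$ let $a(s)$ solve $\int_{a}^1(v-a)\,dG(v)=s$, let $p_h$ be the unique solution of $p=G(1-p)/g(1-p)$, and let $p^o(s)$ be the optimal price, namely $p^o(s)=1-a(s)$ if $1-a(s)\ge p_hG(1-p_h)$ and $p^o(s)=p_h$ otherwise. Then there exists $\hat s_G\in(0,\xi)$ such that $p^o(s)=p_h$ for every $s<\hat s_G$ and $p^o(s)=1-a(s)$ for every $s\ge\hat s_G$; moreover, at $s=\hat s_G$ the optimal price drops from $p_h$ to $1-a(\hat s_G)$, i.e., $1-a(\hat s_G)<p_h$.
   Context: Setting: a seller with a product of binary match value ($\mathbb P(x=1)=\mu\in(0,1)$) chooses a price $p\in[0,1]$ and a distribution $H$ on $[0,1]$ of the buyer's posterior with mean $\mu$, to maximize revenue $p\int_0^1[1-H(p+\min\{a,v\})]\,dG(v)$ for the known outside option CDF $G$, where $s\in[0,\xi)$ is the buyer's search cost. With full information (which is optimal in this setting), the optimal price is $p^o(s)$ as given in the claim. *)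

From Stdlib Require Import Reals Lra.
From Coquelicot Require Import Coquelicot.
Open Scope R_scope.

Definition log_concave_on01 (g : R -> R) : Prop :=
  forall x y t, 0 < x < 1 -> 0 < y < 1 -> 0 <= t <= 1 ->
    t * ln (g x) + (1 - t) * ln (g y) <= ln (g (t * x + (1 - t) * y)).

Definition outside_option_density (g : R -> R) : Prop :=
  (forall x, 0 <= x <= 1 -> 0 <= g x) /\
  (forall x, 0 < x < 1 -> 0 < g x) /\
  ex_RInt g 0 1 /\
  RInt g 0 1 = 1 /\
  log_concave_on01 g.

Definition cdf (g : R -> R) (x : R) : R := RInt g 0 x.

Definition mean (g : R -> R) : R := RInt (fun v => v * g v) 0 1.

Definition solves_a (g : R -> R) (s a : R) : Prop :=
  0 <= a <= 1 /\ RInt (fun v => (v - a) * g v) a 1 = s.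

(* p_h solves p = G(1-p)/g(1-p) (with g(1-p) > 0 so the quotient is genuine) *)
Definition solves_ph (g : R -> R) (p : R) : Prop :=
  0 <= p <= 1 /\ 0 < g (1 - p) /\ p = cdf g (1 - p) / g (1 - p).

Definition p_opt (g : R -> R) (ph : R) (a : R -> R) (s : R) : R :=
  if Rle_dec (ph * cdf g (1 - ph)) (1 - a s) then 1 - a s else ph.

From Stdlib Require Import Reals Lra Lia.
From Coquelicot Require Import Coquelicot.
Open Scope R_scope.

(* The expected excess a |-> int_a^1 (v - a) dG(v) decreases strictly from xi
   at a = 0 to 0 at a = 1, because log-concavity with full support gives every
   subinterval of [0,1] positive G-mass; so a(s) is its inverse and decreases
   in s.  The price 1 - a(s) is chosen exactly when a(s) <= a_0 := 1 - p_h G(1 - p_h),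
   i.e. when s >= s_hat := int_{a_0}^1 (v - a_0) dG(v).  At s_hat the price is
   1 - a_0 = p_h G(1 - p_h) < p_h, since G(1 - p_h) < 1. *)

Lemma ex_RInt_subinterval (f : R -> R) a b u w :
  a <= u -> u <= w -> w <= b -> ex_RInt f a b -> ex_RInt f u w.
Proof.
  intros Hau Huw Hwb Hf.
  apply (ex_RInt_Chasles_2 f a); [lra|].
  apply (ex_RInt_Chasles_1 f a w b); [lra|exact Hf].
Qed.

Lemma RInt_Chasles_R (f : R -> R) a b c :
  ex_RInt f a b -> ex_RInt f b c -> RInt f a b + RInt f b c = RInt f a c.
Proof. exact (RInt_Chasles f a b c). Qed.

Lemma RInt_scal_R (f : R -> R) k a b :
  ex_RInt f a b -> RInt (fun x => k * f x) a b = k * RInt f a b.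
Proof. exact (RInt_scal f a b k). Qed.

Lemma ex_RInt_uniform_limit (f : nat -> R -> R) (h : R -> R) a b :
  a <= b -> (forall n, ex_RInt (f n) a b) ->
  (forall eps : posreal, exists N, forall n x,
     (N <= n)%nat -> a <= x <= b -> Rabs (f n x - h x) < eps) ->
  ex_RInt h a b.
Proof.
  intros Hab Hf Hcv.
  (* the uniform structure on R -> R is uniform convergence on all of R,
     so the functions are first cut off outside [a,b] *)
  set (cut := fun (k : R -> R) x =>
                if Rle_dec a x then if Rle_dec x b then k x else 0 else 0).
  assert (Hcut : forall k x, Rmin a b < x < Rmax a b -> cut k x = k x).
  { rewrite Rmin_left, Rmax_right by lra. intros k x Hx. unfold cut.
    destruct (Rle_dec a x); [|lra]. destruct (Rle_dec x b); [reflexivity|lra]. }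
  destruct (filterlim_RInt (fun n => cut (f n)) a b eventually _ (cut h)
              (fun n => RInt (f n) a b)) as [I [_ HI]].
  - intros n. apply (is_RInt_ext (f n)); [intros x Hx; symmetry; now apply Hcut|].
    exact (RInt_correct _ _ _ (Hf n)).
  - intros P [eps HP]. destruct (Hcv eps) as [N HN]. exists N.
    intros n Hn. apply HP. intros x. unfold cut.
    destruct (Rle_dec a x); [destruct (Rle_dec x b)|].
    + apply HN; [exact Hn|lra].
    + apply ball_center.
    + apply ball_center.
  - exists I. apply (is_RInt_ext (cut h)); [exact (Hcut h)|exact HI].
Qed.

Definition grid_floor (n : nat) (v : R) : R :=
  IZR (Int_part (INR (S n) * v)) / INR (S n).

Lemma grid_floor_cell n (k : nat) v :
  INR k / INR (S n) < v < (INR k + 1) / INR (S n) ->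
  grid_floor n v = INR k / INR (S n).
Proof.
  intros [Hl Hr]. assert (HN : 0 < INR (S n)) by (apply lt_0_INR; lia).
  apply Rlt_div_l in Hl; [|lra]. apply Rlt_div_r in Hr; [|lra].
  unfold grid_floor. rewrite <- (Int_part_spec (INR (S n) * v) (Z.of_nat k)).
  - now rewrite <- INR_IZR_INZ.
  - rewrite <- INR_IZR_INZ. lra.
Qed.

Lemma grid_floor_error n v : 0 <= v - grid_floor n v <= / INR (S n).
Proof.
  assert (HN : 0 < INR (S n)) by (apply lt_0_INR; lia).
  destruct (base_Int_part (INR (S n) * v)) as [Hlo Hhi].
  replace (v - grid_floor n v)
    with ((INR (S n) * v - IZR (Int_part (INR (S n) * v))) * / INR (S n))
    by (unfold grid_floor; field; lra).
  assert (0 < / INR (S n)) by (apply Rinv_0_lt_compat; exact HN).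
  split; [apply Rmult_le_pos; lra|].
  rewrite <- (Rmult_1_l (/ INR (S n))) at 2. apply Rmult_le_compat_r; lra.
Qed.

Lemma ex_RInt_grid_floor_mul (g : R -> R) n :
  ex_RInt g 0 1 -> ex_RInt (fun v => grid_floor n v * g v) 0 1.
Proof.
  intros Hg. assert (HN : 0 < INR (S n)) by (apply lt_0_INR; lia).
  set (N := INR (S n)) in *.
  assert (Hk : forall k, (k <= S n)%nat ->
            ex_RInt (fun v => grid_floor n v * g v) 0 (INR k / N)).
  { induction k as [|k IH]; intros Hle.
    - rewrite Rdiv_0_l. apply ex_RInt_point.
    - assert (Hkn : INR k + 1 <= N) by (unfold N; rewrite <- S_INR; apply le_INR; lia).
      assert (Hk0 : 0 <= INR k) by apply pos_INR.
      assert (E1 : 0 <= INR k / N) by (apply Rdiv_le_0_compat; lra).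
      assert (E2 : INR k / N <= (INR k + 1) / N)
        by (apply Rmult_le_compat_r; [left; apply Rinv_0_lt_compat|]; lra).
      assert (E3 : (INR k + 1) / N <= 1)
        by (apply (Rle_div_l _ _ _ HN); lra).
      rewrite S_INR. apply (ex_RInt_Chasles_0 _ 0 (INR k / N)); [lra|apply IH; lia|].
      apply (ex_RInt_ext (fun v => scal (INR k / N) (g v))).
      + rewrite Rmin_left, Rmax_right by lra. intros x Hx.
        now rewrite (grid_floor_cell n k x Hx).
      + apply (ex_RInt_scal (V := R_NormedModule)).
        apply (ex_RInt_subinterval g 0 1); [lra|lra|lra|exact Hg]. }
  replace 1 with (INR (S n) / N) by (apply Rdiv_diag; apply Rgt_not_eq; exact HN).
  now apply Hk.
Qed.

(* Coquelicot's integral has no product rule: v is approximated uniformly by the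
   step functions [grid_floor n], against which [g] is integrable cell by cell. *)
Lemma ex_RInt_id_mul (g : R -> R) :
  ex_RInt g 0 1 -> ex_RInt (fun v => v * g v) 0 1.
Proof.
  intros Hg.
  destruct (ex_RInt_ub g 0 1 Hg) as [M HM].
  rewrite Rmin_left, Rmax_right in HM by lra.
  assert (HM0 : 0 <= M) by (eapply Rle_trans; [apply Rabs_pos|exact (HM 0 ltac:(lra))]).
  apply (ex_RInt_uniform_limit (fun n v => grid_floor n v * g v)); [lra|
    intros n; now apply ex_RInt_grid_floor_mul|].
  intros eps.
  destruct (archimed_cor1 (eps / (M + 1))) as [N [HN HN0]].
  { apply Rdiv_lt_0_compat; [apply cond_pos|lra]. }
  exists N. intros n x Hn Hx.
  assert (HS : / INR (S n) <= / INR N)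
    by (apply Rinv_le_contravar; [apply lt_0_INR; lia|apply le_INR; lia]).
  pose proof (grid_floor_error n x) as Herr.
  assert (Hgx : Rabs (g x) <= M) by exact (HM x Hx).
  rewrite <- Rmult_minus_distr_r, Rabs_mult, Rabs_left1 by lra.
  apply Rle_lt_trans with (/ INR N * (M + 1)).
  - apply Rmult_le_compat; [lra|apply Rabs_pos|lra|lra].
  - apply (Rmult_lt_reg_r (/ (M + 1))); [apply Rinv_0_lt_compat; lra|].
    rewrite Rmult_assoc, Rinv_r, Rmult_1_r by lra. exact HN.
Qed.

Lemma log_concave_ge_min (g : R -> R) :
  (forall x, 0 < x < 1 -> 0 < g x) -> log_concave_on01 g ->
  forall x y z, 0 < x < 1 -> 0 < y < 1 -> x <= z <= y -> Rmin (g x) (g y) <= g z.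
Proof.
  intros Hpos Hlc x y z Hx Hy Hz.
  destruct (Req_dec x y) as [<-|Hxy].
  { replace z with x by lra. apply Rmin_l. }
  set (t := (y - z) / (y - x)).
  assert (Ht : 0 <= t <= 1).
  { split; [apply Rdiv_le_0_compat; lra|apply (Rle_div_l _ _ _); lra]. }
  pose proof (Hlc x y t Hx Hy Ht) as L.
  replace (t * x + (1 - t) * y) with z in L by (unfold t; field; lra).
  assert (gx := Hpos x Hx). assert (gy := Hpos y Hy).
  assert (gz : 0 < g z) by (apply Hpos; lra).
  set (m := Rmin (g x) (g y)) in *.
  assert (Hm : 0 < m) by (apply Rmin_glb_lt; lra).
  assert (Lx : ln m <= ln (g x)) by (apply ln_le; [lra|apply Rmin_l]).
  assert (Ly : ln m <= ln (g y)) by (apply ln_le; [lra|apply Rmin_r]).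
  destruct (Rle_lt_dec m (g z)) as [ok|bad]; [exact ok|].
  exfalso. pose proof (ln_increasing _ _ gz bad). nra.
Qed.

Lemma RInt_gt_0_log_concave (g : R -> R) :
  (forall x, 0 <= x <= 1 -> 0 <= g x) -> (forall x, 0 < x < 1 -> 0 < g x) ->
  log_concave_on01 g -> ex_RInt g 0 1 ->
  forall u w, 0 <= u < w -> w <= 1 -> 0 < RInt g u w.
Proof.
  intros Hnn Hpos Hlc Hg u w Hu Hw.
  (* g is bounded below by min (g x) (g y) > 0 on the middle third [x,y] *)
  set (x := (2 * u + w) / 3). set (y := (u + 2 * w) / 3).
  assert (Hsub : forall c d, 0 <= c -> c <= d -> d <= 1 -> ex_RInt g c d)
    by (intros; now apply (ex_RInt_subinterval g 0 1)).
  rewrite <- (RInt_Chasles_R g u y w), <- (RInt_Chasles_R g u x y)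
    by (apply Hsub; unfold x, y; lra).
  assert (A : 0 <= RInt g u x).
  { apply RInt_ge_0; [unfold x; lra|apply Hsub; unfold x; lra|].
    intros; apply Hnn; unfold x in *; lra. }
  assert (C : 0 <= RInt g y w).
  { apply RInt_ge_0; [unfold y; lra|apply Hsub; unfold y; lra|].
    intros; apply Hnn; unfold y in *; lra. }
  assert (B : (y - x) * Rmin (g x) (g y) <= RInt g x y).
  { replace ((y - x) * Rmin (g x) (g y)) with (RInt (fun _ => Rmin (g x) (g y)) x y)
      by exact (RInt_const x y _).
    apply RInt_le; [unfold x, y; lra|apply ex_RInt_const|apply Hsub; unfold x, y; lra|].
    intros z Hz. apply (log_concave_ge_min g Hpos Hlc); unfold x, y in *; lra. }
  assert (P : 0 < Rmin (g x) (g y)) by (apply Rmin_glb_lt; apply Hpos; unfold x, y; lra).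
  assert (0 < (y - x) * Rmin (g x) (g y))
    by (apply Rmult_lt_0_compat; [unfold x, y; lra|exact P]).
  lra.
Qed.

Definition excess (g : R -> R) (a : R) : R := RInt (fun v => (v - a) * g v) a 1.

Lemma excess_0 (g : R -> R) : excess g 0 = mean g.
Proof. unfold excess, mean. apply RInt_ext. intros x _. now rewrite Rminus_0_r. Qed.

Lemma excess_1 (g : R -> R) : excess g 1 = 0.
Proof. exact (RInt_point 1 (fun v => (v - 1) * g v)). Qed.

Section Excess.

Variable g : R -> R.
Hypothesis g_ge0 : forall x, 0 <= x <= 1 -> 0 <= g x.
Hypothesis g_int : ex_RInt g 0 1.
Hypothesis g_mass_pos : forall u w, 0 <= u < w -> w <= 1 -> 0 < RInt g u w.

Lemma ex_RInt_shift_mul c u w :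
  0 <= u -> u <= w -> w <= 1 -> ex_RInt (fun v => (v - c) * g v) u w.
Proof.
  intros Hu Huw Hw.
  apply (ex_RInt_ext (fun v => minus (v * g v) (scal c (g v)))).
  - intros x _. change ((x * g x) + - (c * g x) = (x - c) * g x). ring.
  - apply (ex_RInt_minus (V := R_NormedModule));
      [|apply (ex_RInt_scal (V := R_NormedModule))];
      apply (ex_RInt_subinterval _ 0 1); [lra|lra|lra| |lra|lra|lra|exact g_int].
    exact (ex_RInt_id_mul g g_int).
Qed.

Lemma excess_decr a1 a2 : 0 <= a1 < a2 -> a2 <= 1 -> excess g a2 < excess g a1.
Proof.
  intros Ha1 Ha2. unfold excess.
  set (m := (a1 + a2) / 2).
  set (h1 := fun v => (v - a1) * g v).
  rewrite <- (RInt_Chasles_R h1 a1 m 1), <- (RInt_Chasles_R h1 m a2 1)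
    by (apply ex_RInt_shift_mul; unfold m; lra).
  assert (A : 0 <= RInt h1 a1 m).
  { apply RInt_ge_0; [unfold m; lra|apply ex_RInt_shift_mul; unfold m; lra|].
    intros x Hx. apply Rmult_le_pos; [lra|apply g_ge0; unfold m in *; lra]. }
  assert (B : (m - a1) * RInt g m a2 <= RInt h1 m a2).
  { assert (Hgm : ex_RInt g m a2) by (apply (ex_RInt_subinterval g 0 1); auto; unfold m; lra).
    rewrite <- RInt_scal_R by exact Hgm.
    apply RInt_le; [unfold m; lra|now apply (ex_RInt_scal (V := R_NormedModule))|
      apply ex_RInt_shift_mul; unfold m; lra|].
    intros x Hx. apply Rmult_le_compat_r; [apply g_ge0; unfold m in *; lra|lra]. }
  assert (C : RInt (fun v => (v - a2) * g v) a2 1 <= RInt h1 a2 1).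
  { apply RInt_le; [lra|apply ex_RInt_shift_mul; lra|apply ex_RInt_shift_mul; lra|].
    intros x Hx. apply Rmult_le_compat_r; [apply g_ge0; lra|unfold h1; lra]. }
  assert (D : 0 < (m - a1) * RInt g m a2)
    by (apply Rmult_lt_0_compat; [|apply g_mass_pos]; unfold m; lra).
  lra.
Qed.

Lemma excess_le_iff x y :
  0 <= x <= 1 -> 0 <= y <= 1 -> (excess g y <= excess g x <-> x <= y).
Proof.
  intros Hx Hy. split; intros H.
  - destruct (Rle_lt_dec x y) as [ok|lt]; [exact ok|].
    pose proof (excess_decr y x ltac:(lra) ltac:(lra)). lra.
  - destruct (Req_dec x y) as [->|neq]; [lra|].
    pose proof (excess_decr x y ltac:(lra) ltac:(lra)). lra.
Qed.

Lemma solves_a_le_iff s a0 x :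
  solves_a g s a0 -> 0 <= x <= 1 -> (a0 <= x <-> excess g x <= s).
Proof. intros [Ha0 <-] Hx. symmetry. exact (excess_le_iff a0 x Ha0 Hx). Qed.

Lemma solves_a_unique s a1 a2 : solves_a g s a1 -> solves_a g s a2 -> a1 = a2.
Proof.
  intros H1 H2. apply Rle_antisym.
  - apply (solves_a_le_iff s a1 a2 H1 (proj1 H2)). rewrite <- (proj2 H2). apply Rle_refl.
  - apply (solves_a_le_iff s a2 a1 H2 (proj1 H1)). rewrite <- (proj2 H1). apply Rle_refl.
Qed.

End Excess.

Lemma solves_ph_interior (g : R -> R) ph :
  outside_option_density g -> solves_ph g ph -> 0 < ph < 1.
Proof.
  intros (_ & _ & _ & Hmass & _) (Hph & Hgq & Heq). unfold cdf in Heq.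
  split; apply Rnot_le_lt; intros Hle.
  - replace ph with 0 in Heq, Hgq by lra.
    rewrite Rminus_0_r, Hmass in Heq. rewrite Rminus_0_r in Hgq.
    pose proof (Rdiv_lt_0_compat 1 (g 1) Rlt_0_1 Hgq). lra.
  - replace ph with 1 in Heq by lra. rewrite Rminus_diag, RInt_point, Rdiv_0_l in Heq. lra.
Qed.

Lemma cdf_lt_1 (g : R -> R) x :
  ex_RInt g 0 1 -> RInt g 0 1 = 1 ->
  (forall u w, 0 <= u < w -> w <= 1 -> 0 < RInt g u w) ->
  0 <= x < 1 -> cdf g x < 1.
Proof.
  intros Hg Hmass Hpos Hx. unfold cdf.
  assert (0 < RInt g x 1) by (apply Hpos; lra).
  rewrite <- Hmass, <- (RInt_Chasles_R g 0 x 1)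
    by (apply (ex_RInt_subinterval g 0 1); auto; lra).
  lra.
Qed.

Theorem corollary1 (g : R -> R) (a : R -> R) (ph : R) :
  outside_option_density g ->
  0 < mean g < 1 ->
  (forall s, 0 <= s < mean g -> solves_a g s (a s)) ->
  solves_ph g ph ->
  exists sh, 0 < sh < mean g /\
    (forall s, 0 <= s < sh -> p_opt g ph a s = ph) /\
    (forall s, sh <= s < mean g -> p_opt g ph a s = 1 - a s) /\
    1 - a sh < ph.
Proof.
  intros Hdens _ Ha Hph.
  pose proof (solves_ph_interior g ph Hdens Hph) as Hph01.
  destruct Hdens as (Hnn & Hpos & Hg & Hmass & Hlc).
  pose proof (RInt_gt_0_log_concave g Hnn Hpos Hlc Hg) as Hmpos.
  set (c := ph * cdf g (1 - ph)).
  assert (Hc : 0 < c < ph).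
  { assert (0 < cdf g (1 - ph)) by (apply Hmpos; lra).
    pose proof (cdf_lt_1 g (1 - ph) Hg Hmass Hmpos ltac:(lra)).
    unfold c; split; nra. }
  set (sh := excess g (1 - c)).
  assert (Hsh : 0 < sh < mean g).
  { rewrite <- (excess_1 g), <- (excess_0 g).
    split; apply (excess_decr g Hnn Hg Hmpos); lra. }
  assert (Hswitch : forall s, 0 <= s < mean g -> (c <= 1 - a s <-> sh <= s)).
  { intros s Hs. unfold sh.
    rewrite <- (solves_a_le_iff g Hnn Hg Hmpos s (a s) (1 - c)); [split; lra|auto|lra]. }
  exists sh. split; [exact Hsh|split; [|split]].
  - intros s Hs. unfold p_opt. fold c.
    destruct (Rle_dec c (1 - a s)) as [Hle|]; [|reflexivity].
    apply Hswitch in Hle; lra.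
  - intros s Hs. unfold p_opt. fold c.
    destruct (Rle_dec c (1 - a s)) as [|Hnle]; [reflexivity|].
    exfalso. apply Hnle, Hswitch; lra.
  - rewrite (solves_a_unique g Hnn Hg Hmpos sh (a sh) (1 - c)); [lra|apply Ha; lra|].
    split; [lra|reflexivity].
Qed.
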